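(* Let $d\ge 2$, let $B$ be a ball of radius $r\in(0,\pi/2)$ in $\mathbb{S}^d$, and let $S_{\mathrm{reg}}$ be a regular simplex circumscribed about $B$. (i) For every $d\ge3$, if $r$ is sufficiently close to $\pi/2$, then there is a spherical simplex $S$ containing $B$ with $\mathrm{vol}_1(\mathrm{skel}_1(S))<\mathrm{vol}_1(\mathrm{skel}_1(S_{\mathrm{reg}}))$. (ii) For every $r\in(0,\pi/2)$, if $d$ is sufficiently large, then there is a spherical simplex $S$ containing $B$ with $\mathrm{vol}_1(\mathrm{skel}_1(S))<\mathrm{vol}_1(\mathrm{skel}_1(S_{\mathrm{reg}}))$.
   Context: A spherical simplex is the spherical convex hull of $d+1$ points in an open hemisphere of $\mathbb{S}^d$ not on a common great subsphere; it is regular if all its edges have equal length, and circumscribed about $B$ if it contains $B$ and all its facets touch $B$. $\mathrm{vol}_1(\mathrm{skel}_1(S))$ is the total edge length of $S$ (sum of the spherical lengths of its edges). *)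

(* R : realType, points of S^d are unit row vectors in R^(d+1). *)
From HB Require Import structures.
From mathcomp Require Import all_boot all_order all_algebra.
From mathcomp Require Import all_classical all_reals all_analysis.
Set Implicit Arguments. Unset Strict Implicit. Unset Printing Implicit Defensive.
Import Order.TTheory GRing.Theory Num.Theory.
Local Open Scope ring_scope.
Local Open Scope classical_set_scope.

Section SphDefs.
Variable R : realType.

Definition dotp (n : nat) (u v : 'rV[R]_n) : R := \sum_(i < n) u 0 i * v 0 i.

Definition on_sphere (n : nat) (u : 'rV[R]_n) : Prop := dotp u u = 1.

Definition sdist (n : nat) (u v : 'rV[R]_n) : R := acos (dotp u v).

Definition sball (n : nat) (c : 'rV[R]_n) (r : R) : set 'rV[R]_n :=
  [set x | on_sphere x /\ sdist c x <= r].

Definition shull_sub (n m : nat) (v : 'I_m -> 'rV[R]_n) (P : 'I_m -> bool)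
  : set 'rV[R]_n :=
  [set x | on_sphere x /\ exists lam : 'I_m -> R,
      (forall i, 0 <= lam i) /\ (forall i, ~~ P i -> lam i = 0) /\
      x = \sum_(i < m) lam i *: v i].

Definition shull (n m : nat) (v : 'I_m -> 'rV[R]_n) : set 'rV[R]_n :=
  shull_sub v (fun _ => true).

Definition sfacet (n m : nat) (v : 'I_m -> 'rV[R]_n) (j : 'I_m) : set 'rV[R]_n :=
  shull_sub v (fun i => i != j).

Definition in_open_hemisphere (n m : nat) (v : 'I_m -> 'rV[R]_n) : Prop :=
  exists h : 'rV[R]_n, on_sphere h /\ forall i, 0 < dotp h (v i).

Definition on_common_great_subsphere (n m : nat) (v : 'I_m -> 'rV[R]_n) : Prop :=
  exists a : 'rV[R]_n, a != 0 /\ forall i, dotp a (v i) = 0.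

Definition spherical_simplex (d : nat) (v : 'I_d.+1 -> 'rV[R]_d.+1) : Prop :=
  (forall i, on_sphere (v i)) /\ in_open_hemisphere v /\
  ~ on_common_great_subsphere v.

Definition skel1_length (d : nat) (v : 'I_d.+1 -> 'rV[R]_d.+1) : R :=
  \sum_(i < d.+1) \sum_(j < d.+1 | (i < j)%N) sdist (v i) (v j).

Definition regular_simplex (d : nat) (v : 'I_d.+1 -> 'rV[R]_d.+1) : Prop :=
  spherical_simplex v /\
  exists l : R, forall i j, i != j -> sdist (v i) (v j) = l.

Definition circumscribed (d : nat) (v : 'I_d.+1 -> 'rV[R]_d.+1)
  (B : set 'rV[R]_d.+1) : Prop :=
  B `<=` shull v /\ forall j, exists x, sfacet v j x /\ B x.

End SphDefs.

From HB Require Import structures.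
From mathcomp Require Import all_boot all_order all_algebra.
From mathcomp Require Import all_classical all_reals all_analysis.
From mathcomp Require Import ring lra.
Set Implicit Arguments. Unset Strict Implicit. Unset Printing Implicit Defensive.
Import Order.TTheory GRing.Theory Num.Theory.
Import numFieldNormedType.Exports.
Local Open Scope ring_scope.
Local Open Scope classical_set_scope.

(* Only the inclusion of the ball B in S_reg is used, not the tangency of its facets.
   After a reflection B is centred at the pole e_0. If the vertices v_i of a regular simplex
   containing B have pairwise inner products t, the facet normals (1 + d t) v_j - t (sum_i v_i)
   are nonnegative on B; comparing each of them with the centre of B and summing over j gives
   (d + 1) sin^2 r (1 + (d - 1) t) <= 1 - t. So t < 0 once sin r is close to 1 or d is large,
   and every edge acos t of S_reg then exceeds pi/2 - t.
   The competitor keeps the d vertices e_1, ..., e_d, pairwise at distance pi/2, and adds the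
   apex proportional to (cos r, -sin r, ..., -sin r), which makes it contain B. Only its d edges at the apex
   are longer than pi/2, each by at most asin (1/sqrt d), and this is less than the excess
   'C(d+1, 2) (-t) of the regular simplex. *)

Section InnerProduct.
Variables (R : realType) (n : nat).
Implicit Types (u v w : 'rV[R]_n) (a : R).

Lemma dotpC u v : dotp u v = dotp v u.
Proof. by apply: eq_bigr => i _; rewrite mulrC. Qed.

Lemma dotpDl u v w : dotp (u + v) w = dotp u w + dotp v w.
Proof. by rewrite /dotp -big_split; apply: eq_bigr => i _; rewrite mxE mulrDl. Qed.

Lemma dotpZl a u w : dotp (a *: u) w = a * dotp u w.
Proof. by rewrite /dotp mulr_sumr; apply: eq_bigr => i _; rewrite mxE mulrA. Qed.

Lemma dotpNl u w : dotp (- u) w = - dotp u w.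
Proof. by rewrite -scaleN1r dotpZl mulN1r. Qed.

Lemma dotpBl u v w : dotp (u - v) w = dotp u w - dotp v w.
Proof. by rewrite dotpDl dotpNl. Qed.

Lemma dotpDr u v w : dotp w (u + v) = dotp w u + dotp w v.
Proof. by rewrite dotpC dotpDl !(dotpC w). Qed.

Lemma dotpZr a u w : dotp w (a *: u) = a * dotp w u.
Proof. by rewrite dotpC dotpZl dotpC. Qed.

Lemma dotpBr u v w : dotp w (u - v) = dotp w u - dotp w v.
Proof. by rewrite !(dotpC w) dotpBl. Qed.

Lemma dotp0r w : dotp w 0 = 0.
Proof. by rewrite /dotp big1 // => i _; rewrite mxE mulr0. Qed.

Lemma dotp0l w : dotp 0 w = 0.
Proof. by rewrite dotpC dotp0r. Qed.

Lemma dotp_sumr m w (f : 'I_m -> 'rV[R]_n) :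
  dotp w (\sum_(k < m) f k) = \sum_(k < m) dotp w (f k).
Proof. exact: (big_morph _ (fun x y => dotpDr x y w) (dotp0r w)). Qed.

Lemma dotp_suml m w (f : 'I_m -> 'rV[R]_n) :
  dotp (\sum_(k < m) f k) w = \sum_(k < m) dotp (f k) w.
Proof. by rewrite dotpC dotp_sumr; apply: eq_bigr => k _; rewrite dotpC. Qed.

Lemma dotpp_ge0 u : 0 <= dotp u u.
Proof. by apply: sumr_ge0 => i _; rewrite -expr2 sqr_ge0. Qed.

Lemma dotpp_eq0 u : (dotp u u == 0) = (u == 0).
Proof.
apply/idP/eqP => [|->]; last by rewrite dotp0l.
rewrite psumr_eq0 => [/allP u0|i _]; last by rewrite -expr2 sqr_ge0.
apply/rowP => j; rewrite mxE.
by have := u0 j (mem_index_enum _); rewrite /= mulf_eq0 orbb => /eqP.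
Qed.

Lemma dotp_sqr_le_unit u c : on_sphere c -> dotp u c ^+ 2 <= dotp u u.
Proof.
move=> hc; have := dotpp_ge0 (u - dotp u c *: c).
by rewrite !dotpBl !dotpBr !dotpZl !dotpZr hc (dotpC c u); lra.
Qed.

Lemma dotp_sphere_itv u v : on_sphere u -> on_sphere v -> -1 <= dotp u v <= 1.
Proof. by move=> hu /(dotp_sqr_le_unit u); rewrite hu => ?; apply/andP; split; nra. Qed.

Definition ek (k : 'I_n) : 'rV[R]_n := \row_j (j == k)%:R.

Lemma dotp_ek u k : dotp u (ek k) = u 0 k.
Proof.
rewrite /dotp (bigD1 k) //= big1 ?addr0 => [|j /negPf jk]; rewrite !mxE ?jk.
  by rewrite eqxx mulr1.
by rewrite mulr0.
Qed.

Lemma ek_on_sphere k : on_sphere (ek k).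
Proof. by rewrite /on_sphere dotp_ek mxE eqxx. Qed.

End InnerProduct.
Arguments ek {R n} k.
Arguments ek_on_sphere {R n} k.

Section Trigonometry.
Variable R : realType.
Implicit Types x t y K : R.

Let sin_term x m := x ^+ m.*2.+1 / (m.*2.+1)`!%:R.

Let sin_coeff'E x k : sin_coeff' x k = (-1) ^+ odd k * sin_term x k.
Proof. by rewrite /sin_coeff' -exprnP signr_odd mulrA. Qed.

Let sin_term_decr x m : 0 < x < 2 -> sin_term x m.+1 < sin_term x m.
Proof.
move=> /andP[x0 x2].
have -> : sin_term x m.+1 = sin_term x m * (x ^+ 2 / ((m.*2.+2)%:R * (m.*2.+3)%:R)).
  rewrite /sin_term doubleS (factS m.*2.+2) (factS m.*2.+1) !natrM !invfM.
  by rewrite (_ : m.*2.+3 = m.*2.+1 + 2)%N ?exprD ?addn2 //; ring.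
have term_gt0 : 0 < sin_term x m by rewrite divr_gt0 ?exprn_gt0 ?ltr0n ?fact_gt0.
rewrite gtr_pMr // ltr_pdivrMr ?mulr_gt0 ?ltr0n // mul1r.
have : 2%:R <= (m.*2.+2)%:R :> R by rewrite ler_nat.
have : 2%:R <= (m.*2.+3)%:R :> R by rewrite ler_nat.
nra.
Qed.

(* Both bounds come from pairing consecutive terms of the alternating sine series. *)
Lemma sin_lt_x x : 0 < x < 2 -> sin x < x.
Proof.
move=> hx; rewrite -(opprK (sin x)) ltrNl.
have /cvgN cvg_sin := @cvg_sin_coeff' R x.
rewrite -(cvg_lim (@Rhausdorff R) cvg_sin).
have -> : - x = \sum_(0 <= i < 1) (- sin_coeff' x) i.
  by rewrite big_nat1 -[RHS]/(- sin_coeff' x 0) sin_coeff'E /sin_term /= expr0 mul1r expr1 divr1.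
rewrite -seriesN; apply: lt_sum_lim_series; first by move/cvgP: cvg_sin; rewrite seriesN.
move=> k; change (0 < - sin_coeff' x (1 + k.*2) + - sin_coeff' x (1 + k.*2.+1)).
rewrite !sin_coeff'E add1n /= odd_double /= !mulN1r !mul1r opprK.
by have := sin_term_decr (k.*2.+1) hx; rewrite add1n; lra.
Qed.

Lemma cubic_lt_sin x : 0 < x < 2 -> x - x ^+ 3 / 6 < sin x.
Proof.
move=> hx; have cvg_sin := @cvg_sin_coeff' R x.
have : \sum_(0 <= i < 2) sin_coeff' x i < sin x.
  rewrite -(cvg_lim (@Rhausdorff R) cvg_sin).
  apply: lt_sum_lim_series; first by move/cvgP: cvg_sin.
  move=> k; rewrite /= !sin_coeff'E add2n /= odd_double /= mulN1r mul1r.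
  by have := sin_term_decr (k.*2.+2) hx; rewrite add2n; lra.
by rewrite big_nat_recr //= big_nat1 !sin_coeff'E /sin_term /= expr0 mul1r mulN1r divr1.
Qed.

Lemma pihalfB_le_acos t : -1 <= t <= 0 -> pi / 2 - t <= acos t.
Proof.
move=> /andP[t1 t0]; have ht : -1 <= t <= 1 by apply/andP; split; lra.
have cos_acos : cos (acos t) = t by rewrite acosK // in_itv /=.
have acos_ge0t := acos_ge0 ht; have acos_lepit := acos_lepi ht.
have pihalf_lt := pihalf_lt2 R.
have [lt_pihalf|ge_pihalf] := ltP (acos t) (pi / 2).
  have : 0 < cos (acos t) by apply: cos_gt0_pihalf; rewrite lt_pihalf andbT; lra.
  by rewrite cos_acos; lra.
have sin_shift : sin (acos t - pi / 2) = - t by rewrite sinBpihalf cos_acos.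
have [eq_pihalf|] := eqVneq (acos t) (pi / 2).
  by move: sin_shift; rewrite eq_pihalf subrr sin0; lra.
rewrite neq_lt ltNge ge_pihalf /= => gt_pihalf.
suff : - t < acos t - pi / 2 by lra.
by rewrite -sin_shift; apply: sin_lt_x; apply/andP; split; lra.
Qed.

Lemma acosN_le_pihalfD y K : 0 <= y <= 1 -> 0 <= K <= pi / 2 -> y <= sin K ->
  acos (- y) <= pi / 2 + K.
Proof.
move=> /andP[y0 y1] /andP[K0 K1] le_y_sinK.
have hy : -1 <= - y <= 1 by apply/andP; split; lra.
have cos_acos : cos (acos (- y)) = - y by rewrite acosK // in_itv /=.
rewrite leNgt; apply/negP => lt_acos.
have : cos (acos (- y)) < cos (pi / 2 + K).
  by rewrite ltr_cos ?in_itv /= ?acos_ge0 ?acos_lepi //; apply/andP; split; lra.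
by rewrite cos_acos addrC cosDpihalf; lra.
Qed.

Lemma cos_le_of_acos_le x r : -1 <= x <= 1 -> 0 <= r <= pi -> acos x <= r -> cos r <= x.
Proof.
move=> hx hr le_acos; rewrite -[X in _ <= X](acosK (x := x)) ?in_itv //.
by rewrite leNgt ltr_cos ?in_itv /= ?acos_ge0 ?acos_lepi // -leNgt.
Qed.

End Trigonometry.

Section Isometry.
Variables (R : realType) (d : nat) (f : {linear 'rV[R]_d.+1 -> 'rV[R]_d.+1}).
Hypothesis dotp_f : forall x y, dotp (f x) (f y) = dotp x y.
Hypothesis fK : involutive f.

Lemma on_sphere_isometry x : on_sphere (f x) = on_sphere x.
Proof. by rewrite /on_sphere dotp_f. Qed.

Lemma spherical_simplex_isometry (v : 'I_d.+1 -> 'rV[R]_d.+1) :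
  spherical_simplex v -> spherical_simplex (f \o v).
Proof.
move=> [v_sphere [[h [h_sphere h_pos]] v_nondeg]]; split; [|split].
- by move=> i; rewrite /= on_sphere_isometry.
- by exists (f h); rewrite on_sphere_isometry; split => // i; rewrite /= dotp_f.
- move=> [a [a_neq0 a_orth]]; apply: v_nondeg; exists (f a); split.
    by apply: contra a_neq0 => /eqP fa0; rewrite -[a]fK fa0 linear0.
  by move=> i; rewrite -[v i]fK dotp_f a_orth.
Qed.

Lemma sball_sub_shull_isometry (v : 'I_d.+1 -> 'rV[R]_d.+1) c r :
  sball c r `<=` shull v -> sball (f c) r `<=` shull (f \o v).
Proof.
move=> B_sub x [x_sphere cx_le]; split => //.
have [_ [lam [lam_ge0 [_ fx_eq]]]] : shull v (f x).
  by apply: B_sub; rewrite /sball /= on_sphere_isometry /sdist -[c]fK dotp_f.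
exists lam; do 2!split => //.
by rewrite -[x]fK fx_eq linear_sum; apply: eq_bigr => k _; rewrite linearZ.
Qed.

Lemma skel1_length_isometry (v : 'I_d.+1 -> 'rV[R]_d.+1) :
  skel1_length (f \o v) = skel1_length v.
Proof. by apply: eq_bigr => i _; apply: eq_bigr => j _; rewrite /sdist dotp_f. Qed.

End Isometry.

Section Householder.
Variables (R : realType) (n : nat).
Implicit Types (w x y : 'rV[R]_n).

Definition householder w x := x - (2 * dotp w x / dotp w w) *: w.

Lemma householder_is_linear w : linear (householder w).
Proof.
move=> a x y; rewrite /householder dotpDr dotpZr mulrDr mulrDl scalerDl scalerBr scalerA.
by rewrite (mulrCA 2 a) [a * (2 * _ / _)]mulrA opprD addrACA.
Qed.

HB.instance Definition _ w :=
  GRing.isLinear.Build R 'rV[R]_n 'rV[R]_n *:%R (householder w) (householder_is_linear w).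

Lemma dotp_householder w x y : dotp (householder w x) (householder w y) = dotp x y.
Proof.
rewrite /householder !dotpBl !dotpBr !dotpZl !dotpZr (dotpC x w).
have [->|ww_neq0] := eqVneq (dotp w w) 0; first by rewrite !invr0 !mulr0 !mul0r !subr0.
by field.
Qed.

Lemma householderK w : involutive (householder w).
Proof.
move=> x; rewrite /householder dotpBr dotpZr.
have [->|ww_neq0] := eqVneq (dotp w w) 0; first by rewrite !invr0 !mulr0 !scale0r !subr0.
rewrite -addrA -opprD -scalerDl.
have -> : 2 * dotp w x / dotp w w +
    2 * (dotp w x - 2 * dotp w x / dotp w w * dotp w w) / dotp w w = 0 by field.
by rewrite scale0r subr0.
Qed.

End Householder.

Lemma householder_ek0 (R : realType) n (c : 'rV[R]_n.+1) :
  on_sphere c -> householder (ek 0 - c) (ek 0) = c.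
Proof.
move=> c_sphere; rewrite /householder.
have wx : dotp (ek 0 - c) (ek 0) = 1 - dotp (ek 0) c.
  by rewrite dotpBl (ek_on_sphere 0) dotpC.
have ww : dotp (ek 0 - c) (ek 0 - c) = 2 - 2 * dotp (ek 0) c.
  by rewrite dotpBr wx dotpBl c_sphere; lra.
have [c_ek0|ww_neq0] := eqVneq (dotp (ek 0 - c) (ek 0 - c)) 0.
  move/eqP: (c_ek0); rewrite dotpp_eq0 subr_eq0 => /eqP <-.
  by rewrite subrr scaler0 subr0.
rewrite wx ww in ww_neq0 *.
rewrite (_ : 2 * (1 - _) / _ = 1); last by field.
by rewrite scale1r opprB addrC subrK.
Qed.

Lemma sball_transport (R : realType) d (v : 'I_d.+1 -> 'rV[R]_d.+1) c r :
  on_sphere c -> spherical_simplex v -> sball (ek 0) r `<=` shull v ->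
  exists S : 'I_d.+1 -> 'rV[R]_d.+1,
    spherical_simplex S /\ sball c r `<=` shull S /\ skel1_length S = skel1_length v.
Proof.
move=> c_sphere v_simplex B_sub; set f := householder (ek 0 - c).
have dotp_f := dotp_householder (ek 0 - c); have fK := householderK (ek 0 - c).
exists (f \o v); split; first exact: spherical_simplex_isometry.
split; last exact: skel1_length_isometry.
by rewrite -(householder_ek0 c_sphere); exact: sball_sub_shull_isometry.
Qed.

Lemma exists_orthogonal (R : realType) n (u : 'rV[R]_n.+2) :
  on_sphere u -> exists2 a : 'rV[R]_n.+2, a != 0 & dotp a u = 0.
Proof.
move=> u_sphere; set f := householder (ek 0 - u); exists (f (ek 1)).
  by rewrite -dotpp_eq0 dotp_householder (ek_on_sphere 1) oner_eq0.
by rewrite -(householder_ek0 u_sphere) dotp_householder dotp_ek mxE.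
Qed.

Lemma sum_pairs_const (V : nmodType) n (x : V) :
  \sum_(i < n) \sum_(j < n | (i < j)%N) x = x *+ 'C(n, 2).
Proof.
elim: n => [|n IH]; first by rewrite big_ord0 bin0n.
rewrite big_ord_recr /= [X in _ + X]big1 => [|j]; last by rewrite ltnNge -ltnS ltn_ord.
rewrite addr0 (eq_bigr (fun i : 'I_n => \sum_(j < n | (i < j)%N) x + x)) => [|i _].
  by rewrite big_split /= IH sumr_const card_ord binS bin1 mulrnDr addrC.
by rewrite big_mkcond big_ord_recr /= ltn_ord -big_mkcond.
Qed.

Lemma sqr_add_le_dotpp (R : realType) n (x : 'rV[R]_n) i j :
  i != j -> x 0 i ^+ 2 + x 0 j ^+ 2 <= dotp x x.
Proof.
move=> ij; rewrite /dotp (bigD1 i) //= (bigD1 j) 1?eq_sym //= !expr2 addrA lerDl.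
by apply: sumr_ge0 => k _; rewrite -expr2 sqr_ge0.
Qed.

Lemma in_open_hemisphere_of_pos (R : realType) n m (v : 'I_m.+1 -> 'rV[R]_n) g :
  (forall i, 0 < dotp g (v i)) -> in_open_hemisphere v.
Proof.
move=> g_pos; have gg_gt0 : 0 < dotp g g.
  rewrite lt_def dotpp_ge0 dotpp_eq0 andbT; apply: contraTneq (g_pos 0) => ->.
  by rewrite dotp0l ltxx.
exists ((Num.sqrt (dotp g g))^-1 *: g); split => [|i].
  by rewrite /on_sphere dotpZl dotpZr mulrA -expr2 exprVn sqr_sqrtr ?mulVf ?gt_eqF ?ltW.
by rewrite dotpZl mulr_gt0 ?invr_gt0 ?sqrtr_gt0.
Qed.

Section CornerSimplex.
Variables (R : realType) (d : nat).

Definition axial (a b : R) : 'rV[R]_d.+1 := \row_j (if j == 0 then a else b).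

Lemma dotp_axial a b a' b' : dotp (axial a b) (axial a' b') = a * a' + d%:R * (b * b').
Proof.
rewrite /dotp big_ord_recl !mxE /=; congr (_ + _).
by rewrite (eq_bigr (fun _ => b * b')) => [|j _]; rewrite ?sumr_const ?card_ord ?mulr_natl // !mxE.
Qed.

Lemma dotp_axial_ek a b k : dotp (axial a b) (ek k) = if k == 0 then a else b.
Proof. by rewrite dotp_ek mxE. Qed.

Variable r : R.

Local Notation N := (Num.sqrt (cos r ^+ 2 + d%:R * sin r ^+ 2)).

Definition corner_apex : 'rV[R]_d.+1 := axial (cos r / N) (- (sin r / N)).

Definition corner_simplex (k : 'I_d.+1) : 'rV[R]_d.+1 :=
  if k == 0 then corner_apex else ek k.

Hypothesis r_gt0 : 0 < r.
Hypothesis r_lt_pihalf : r < pi / 2.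

Let cos_gt0 : 0 < cos r.
Proof.
by apply: cos_gt0_pihalf; rewrite r_lt_pihalf andbT (lt_trans _ r_gt0) // oppr_lt0 divr_gt0 ?pi_gt0.
Qed.

Let sin_gt0 : 0 < sin r.
Proof. by apply: sin_gt0_pihalf; rewrite r_gt0. Qed.

Let N_gt0 : 0 < N.
Proof. by rewrite sqrtr_gt0 (lt_le_trans (exprn_gt0 2 cos_gt0)) // lerDl mulr_ge0 ?sqr_ge0. Qed.

Let sqrN : N ^+ 2 = cos r ^+ 2 + d%:R * sin r ^+ 2.
Proof. by rewrite sqr_sqrtr // (addr_ge0 (sqr_ge0 _) (mulr_ge0 (ler0n _ _) (sqr_ge0 _))). Qed.

Local Notation cN := (cos r / N).
Local Notation sN := (sin r / N).

Let cN_gt0 : 0 < cN. Proof. exact: divr_gt0. Qed.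
Let sN_gt0 : 0 < sN. Proof. exact: divr_gt0. Qed.

Let apex_unit : cN ^+ 2 + d%:R * sN ^+ 2 = 1.
Proof. by rewrite !expr_div_n sqrN; field; rewrite -sqrN gt_eqF ?exprn_gt0. Qed.

Let apex_slope : sN / cN = sin r / cos r.
Proof. by field; rewrite !gt_eqF. Qed.

Let apex_sqr_le : d%:R * sN ^+ 2 <= 1.
Proof. by have := apex_unit; have := sqr_ge0 cN; lra. Qed.

Lemma corner_simplex_spherical : spherical_simplex corner_simplex.
Proof.
split; [|split].
- move=> k; rewrite /corner_simplex; case: eqP => _; last exact: ek_on_sphere.
  by rewrite /on_sphere dotp_axial mulrNN -!expr2.
- apply: (@in_open_hemisphere_of_pos _ _ _ _ (axial (d.+1%:R * sN) cN)) => k.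
  rewrite /corner_simplex; case: eqP => [_|/eqP k0]; last by rewrite dotp_axial_ek (negPf k0).
  rewrite dotp_axial -natr1 (_ : (d%:R + 1) * _ * _ + _ = sN * cN); last by ring.
  exact: mulr_gt0.
- move=> [a [a_neq0 a_orth]]; move/negP: a_neq0; apply.
  have ak0 k : k != 0 -> a 0 k = 0.
    by move=> k0; rewrite -dotp_ek -(a_orth k) /corner_simplex (negPf k0).
  have a_ek0 : a = a 0 0 *: ek 0.
    apply/rowP => k; rewrite !mxE; case: eqVneq => [->|k0]; first by rewrite mulr1.
    by rewrite ak0 // mulr0.
  have := a_orth 0; rewrite /corner_simplex eqxx a_ek0 dotpZl dotpC dotp_axial_ek eqxx.
  move/eqP; rewrite mulf_eq0 => /orP[/eqP ->|]; first by rewrite scale0r.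
  by rewrite gt_eqF.
Qed.

Lemma sball_sub_corner_simplex : sball (ek 0) r `<=` shull corner_simplex.
Proof.
move=> x [x_sphere x_near]; split => //.
have x0_itv := dotp_sphere_itv (ek_on_sphere 0) x_sphere; rewrite dotpC dotp_ek in x0_itv.
have x0_ge : cos r <= x 0 0.
  apply: cos_le_of_acos_le => //; last by move: x_near; rewrite /sdist dotpC dotp_ek.
  by have := pi_gt0 R; have := r_gt0; have := r_lt_pihalf; move=> *; apply/andP; split; lra.
have xk_ge k : k != 0 -> - sin r <= x 0 k.
  move=> k0; have := sqr_add_le_dotpp x k0; rewrite x_sphere => sqr_le.
  by have := cos2Dsin2 r; have := cos_gt0; have := sin_gt0; nra.
have sin_le : sin r <= x 0 0 * (sin r / cos r).
  rewrite mulrCA; apply: ler_peMr; first exact: ltW.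
  by rewrite ler_pdivlMr // mul1r.
exists (fun k => if k == 0 then x 0 0 / cN else x 0 k + x 0 0 * (sN / cN)).
split; [|split] => // [k|].
  case: eqVneq => [_|k0]; first by rewrite divr_ge0 ?ltW //; have := cos_gt0; lra.
  by rewrite apex_slope; have := xk_ge k k0; lra.
apply/rowP => j; rewrite summxE (bigD1 0) //= /corner_simplex eqxx !mxE.
case: (eqVneq j 0) => [->|j0].
  rewrite big1 ?addr0 => [|i /negPf i0]; first by rewrite divfK ?gt_eqF.
  by rewrite i0 !mxE eq_sym i0 mulr0.
rewrite (bigD1 j) //= big1 ?addr0 => [|i /andP[/negPf i0 /negPf ij]].
  by rewrite (negPf j0) !mxE eqxx mulr1; ring.
by rewrite i0 !mxE eq_sym ij mulr0.
Qed.

Let sdist_corner_simplex (i j : 'I_d.+1) : (i < j)%N ->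
  sdist (corner_simplex i) (corner_simplex j) =
  pi / 2 + (i == 0)%:R * (acos (- sN) - pi / 2).
Proof.
move=> ij; have j0 : j != 0 by rewrite -lt0n (leq_ltn_trans _ ij).
rewrite /sdist /corner_simplex (negPf j0); case: eqP => [_|/eqP i0].
  by rewrite dotp_axial_ek (negPf j0) mulr1n mul1r (addrC (pi / 2)) subrK.
have /negPf ij_neq : i != j by apply: contraTneq ij => ->; rewrite ltnn.
by rewrite dotp_ek mxE [j == i]eq_sym ij_neq acos0 mulr0n mul0r addr0.
Qed.

Lemma skel1_length_corner_simplex_le K : 0 <= K <= pi / 2 -> 1 <= d%:R * sin K ^+ 2 ->
  skel1_length corner_simplex <= pi / 2 *+ 'C(d.+1, 2) + d%:R * K.
Proof.
move=> /andP[K_ge0 K_le] d_sinK.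
have sinK_ge0 : 0 <= sin K by apply: sin_ge0_pi; apply/andP; split; have := pi_gt0 R; lra.
have d_gt0 : 0 < d%:R :> R.
  by rewrite ltr0n lt0n; apply: contraTneq d_sinK => ->; rewrite mul0r -ltNge ltr01.
have sN_le : sN <= sin K.
  have sN_ge0 := ltW sN_gt0.
  by rewrite -ler_sqr ?nnegrE // -(ler_pM2l d_gt0) (le_trans apex_sqr_le).
have acos_le : acos (- sN) <= pi / 2 + K.
  by apply: acosN_le_pihalfD => //; have := sin_le1 K; have := sN_gt0; move=> *; apply/andP; split; lra.
rewrite /skel1_length (eq_bigr (fun i : 'I_d.+1 => \sum_(j < d.+1 | (i < j)%N)
    (pi / 2 + (i == 0)%:R * (acos (- sN) - pi / 2)))) => [|i _]; last first.
  by apply: eq_bigr => j; apply: sdist_corner_simplex.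
under eq_bigr do rewrite big_split /=.
rewrite big_split /= sum_pairs_const lerD2l big_ord_recl /= [X in _ + X]big1 => [|i _].
  rewrite addr0 (eq_bigl (fun j => j != 0)) => [|j]; last by rewrite lt0n.
  rewrite sumr_const (_ : #|_| = d); last by have := cardC1 (0 : 'I_d.+1); rewrite card_ord.
  by rewrite mul1r [d%:R * K]mulr_natl lerMn2r; apply/orP; right; lra.
by apply: big1 => j _; rewrite mul0r.
Qed.

End CornerSimplex.

Lemma sball_cos_sin (R : realType) n (c m : 'rV[R]_n) r : 0 <= r <= pi ->
  on_sphere c -> on_sphere m -> dotp m c = 0 -> sball c r (cos r *: c + sin r *: m).
Proof.
move=> r_itv c_sphere m_sphere mc0; have cm0 : dotp c m = 0 by rewrite dotpC.
split; last by rewrite /sdist dotpDr !dotpZr c_sphere cm0 mulr0 addr0 mulr1 cosK.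
rewrite /on_sphere !(dotpDl, dotpDr, dotpZl, dotpZr) c_sphere m_sphere cm0 mc0.
by rewrite !mulr0 !addr0 add0r !mulr1 -!expr2 cos2Dsin2.
Qed.

(* Test [w] at the boundary point of the cap opposite to the component of [w] orthogonal to [c]. *)
Lemma sball_support_bound (R : realType) n (c w : 'rV[R]_n) r :
  0 < r < pi / 2 -> on_sphere c -> (forall x, sball c r x -> 0 <= dotp w x) ->
  0 <= dotp w c /\ sin r ^+ 2 * dotp w w <= dotp w c ^+ 2.
Proof.
move=> /andP[r_gt0 r_lt] c_sphere w_ge0.
have r_itv : 0 <= r <= pi by apply/andP; split; have := pi_gt0 R; lra.
have wc_ge0 : 0 <= dotp w c.
  by apply: w_ge0; split => //; rewrite /sdist c_sphere acos1 ltW.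
split => //; set a := dotp w c; set m := w - a *: c.
have mc0 : dotp m c = 0 by rewrite dotpBl dotpZl c_sphere mulr1 subrr.
have mm : dotp m m = dotp w w - a ^+ 2.
  by rewrite !(dotpBl, dotpBr, dotpZl, dotpZr) c_sphere (dotpC c) -/a; ring.
have wm : dotp w m = dotp m m by rewrite mm dotpBr dotpZr -/a expr2.
have sin2_le1 : sin r ^+ 2 <= 1 by have := cos2Dsin2 r; have := sqr_ge0 (cos r); lra.
have [m0|m_neq0] := eqVneq m 0.
  move: mm; rewrite m0 dotp0l => /eqP; rewrite eq_sym subr_eq0 => /eqP ->.
  by rewrite ler_piMl ?sqr_ge0.
have mm_gt0 : 0 < dotp m m by rewrite lt_def dotpp_eq0 m_neq0 dotpp_ge0.
set mu := Num.sqrt (dotp m m).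
have mu_gt0 : 0 < mu by rewrite sqrtr_gt0.
have mu2 : mu ^+ 2 = dotp m m by rewrite sqr_sqrtr // ltW.
have unit_m : on_sphere (- mu^-1 *: m).
  by rewrite /on_sphere dotpZl dotpZr mulrA mulrNN -expr2 exprVn mu2 mulVf ?gt_eqF.
have unit_mc : dotp (- mu^-1 *: m) c = 0 by rewrite dotpZl mc0 mulr0.
have := w_ge0 _ (sball_cos_sin r_itv c_sphere unit_m unit_mc).
rewrite dotpDr !dotpZr -/a wm -mu2 expr2 mulNr mulKf ?gt_eqF //.
move=> ge0; have : (sin r * mu) ^+ 2 <= (cos r * a) ^+ 2.
  have sin_ge0 := sin_ge0_pi r_itv; have mu_ge0 := ltW mu_gt0.
  have cos_ge0 : 0 <= cos r by apply: cos_ge0_pihalf; apply/andP; split; lra.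
  by rewrite ler_sqr ?nnegrE ?mulr_ge0 //; lra.
by rewrite !exprMn mu2 mm; have := cos2Dsin2 r; nra.
Qed.

Section RegularGram.
Variables (R : realType) (d : nat) (v : 'I_d.+1 -> 'rV[R]_d.+1) (t : R).
Hypothesis v_sphere : forall i, on_sphere (v i).
Hypothesis v_gram : forall i j, i != j -> dotp (v i) (v j) = t.

Local Notation V := (\sum_(i < d.+1) v i).

Lemma dotp_vertex_sum j : dotp (v j) V = 1 + d%:R * t.
Proof.
rewrite dotp_sumr (bigD1 j) //= v_sphere (eq_bigr (fun _ => t)) => [|i ij]; last first.
  by rewrite v_gram // eq_sym.
by rewrite sumr_const (_ : #|_| = d) ?mulr_natl //; have := cardC1 j; rewrite card_ord.
Qed.

Lemma dotpp_vertex_sum : dotp V V = d.+1%:R * (1 + d%:R * t).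
Proof.
rewrite dotp_suml (eq_bigr (fun _ => 1 + d%:R * t)) => [|j _]; last exact: dotp_vertex_sum.
by rewrite sumr_const card_ord [RHS]mulr_natl.
Qed.

Lemma vertex_sum_gt0 : in_open_hemisphere v -> 0 < 1 + d%:R * t.
Proof.
move=> [h [h_sphere h_pos]].
have hV_gt0 : 0 < dotp h V.
  by rewrite dotp_sumr (bigD1 0) //= ltr_pwDl // sumr_ge0 // => i _; exact: ltW.
have := dotp_sqr_le_unit V h_sphere; rewrite dotpC dotpp_vertex_sum => sqr_le.
by rewrite -(pmulr_rgt0 _ (ltr0Sn R d)) (lt_le_trans _ sqr_le) // exprn_gt0.
Qed.

Definition facet_normal j := (1 + d%:R * t) *: v j - t *: V.

Lemma dotp_facet_normal j i :
  dotp (facet_normal j) (v i) = (i == j)%:R * ((1 + d%:R * t) * (1 - t)).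
Proof.
rewrite dotpBl !dotpZl (dotpC V) dotp_vertex_sum.
by case: eqVneq => [->|ij]; rewrite ?v_sphere ?v_gram 1?eq_sym ?mulr1n ?mulr0n //; ring.
Qed.

Lemma dotpp_facet_normal j :
  dotp (facet_normal j) (facet_normal j) = (1 + d%:R * t) * (1 - t) * (1 + (d%:R - 1) * t).
Proof.
rewrite !(dotpBl, dotpBr, dotpZl, dotpZr) v_sphere dotp_vertex_sum (dotpC V).
by rewrite dotp_vertex_sum dotpp_vertex_sum -natr1; ring.
Qed.

Lemma sum_dotp_facet_normal c : \sum_j dotp (facet_normal j) c = (1 - t) * dotp V c.
Proof.
rewrite (eq_bigr (fun j => (1 + d%:R * t) * dotp (v j) c - t * dotp V c)) => [|j _].
  by rewrite sumrB -mulr_sumr -dotp_suml sumr_const card_ord mulrSr; ring.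
by rewrite dotpBl !dotpZl.
Qed.

Lemma regular_sball_bound c r : 0 < 1 + d%:R * t -> t < 1 ->
  0 < r < pi / 2 -> on_sphere c -> sball c r `<=` shull v ->
  d.+1%:R * sin r ^+ 2 * (1 + (d%:R - 1) * t) <= 1 - t.
Proof.
move=> a_gt0 t_lt1 r_bnd c_sphere B_sub; set a := 1 + d%:R * t.
have t1_gt0 : 0 < 1 - t by rewrite subr_gt0.
have normal_ge0 j x : sball c r x -> 0 <= dotp (facet_normal j) x.
  move=> /B_sub [_ [lam [lam_ge0 [_ ->]]]]; rewrite dotp_sumr (bigD1 j) //= big1 ?addr0.
    rewrite dotpZr dotp_facet_normal eqxx mulr1n mul1r.
    by apply: mulr_ge0 => //; apply: mulr_ge0; apply: ltW.
  by move=> i ij; rewrite dotpZr dotp_facet_normal (negPf ij) mul0r mulr0.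
set Q := a * (1 - t) * (1 + (d%:R - 1) * t).
have Q_ge0 : 0 <= Q by rewrite /Q -(dotpp_facet_normal 0) dotpp_ge0.
set b := Num.sqrt (sin r ^+ 2 * Q).
have b2 : b ^+ 2 = sin r ^+ 2 * Q by rewrite sqr_sqrtr // mulr_ge0 ?sqr_ge0.
have b_le j : b <= dotp (facet_normal j) c.
  have [nc_ge0] := sball_support_bound r_bnd c_sphere (normal_ge0 j).
  by rewrite dotpp_facet_normal -/a -/Q -b2 ler_sqr ?nnegrE ?sqrtr_ge0.
have sum_le : d.+1%:R * b <= (1 - t) * dotp V c.
  rewrite -sum_dotp_facet_normal (_ : _ * b = \sum_(j < d.+1) b); first exact: ler_sum.
  by rewrite sumr_const card_ord mulr_natl.
have Vc_le := dotp_sqr_le_unit V c_sphere; rewrite dotpp_vertex_sum -/a in Vc_le.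
have key : d.+1%:R * a * (1 - t) * (d.+1%:R * sin r ^+ 2 * (1 + (d%:R - 1) * t)) <=
    d.+1%:R * a * (1 - t) * (1 - t).
  rewrite (_ : _ * (_ * _ * _) = (d.+1%:R * b) ^+ 2); last by rewrite exprMn b2 /Q; ring.
  rewrite (_ : _ * (1 - t) = (1 - t) ^+ 2 * (d.+1%:R * a)); last by ring.
  apply: (le_trans (_ : _ <= ((1 - t) * dotp V c) ^+ 2)); last first.
    by rewrite exprMn ler_wpM2l ?sqr_ge0.
  have sum_ge0 : 0 <= d.+1%:R * b by rewrite mulr_ge0 ?sqrtr_ge0.
  by rewrite ler_sqr ?nnegrE ?(le_trans sum_ge0 sum_le).
by rewrite ler_pM2l ?mulr_gt0 ?ltr0Sn in key.
Qed.

End RegularGram.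

Lemma regular_simplex_gram (R : realType) d (v : 'I_d.+1 -> 'rV[R]_d.+1) :
  (0 < d)%N -> regular_simplex v -> exists t, [/\ -1 <= t <= 1,
    forall i j, i != j -> dotp (v i) (v j) = t & skel1_length v = acos t *+ 'C(d.+1, 2)].
Proof.
move=> d_gt0 [[v_sphere _] [l v_edge]].
have v_gram i j : i != j -> dotp (v i) (v j) = cos l.
  by move=> ij; rewrite -(v_edge i j ij) /sdist acosK // in_itv /= dotp_sphere_itv.
have ord0_max : (0 : 'I_d.+1) != ord_max by rewrite -val_eqE /= eq_sym -lt0n.
exists (cos l); split => //; first by rewrite -(v_gram _ _ ord0_max) dotp_sphere_itv.
rewrite /skel1_length -sum_pairs_const; apply: eq_bigr => i _; apply: eq_bigr => j ij.
by rewrite /sdist v_gram //; apply: contraTneq ij => ->; rewrite ltnn.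
Qed.

Lemma regular_gram_lt1 (R : realType) d (v : 'I_d.+1 -> 'rV[R]_d.+1) t : (0 < d)%N ->
  spherical_simplex v -> (forall i j, i != j -> dotp (v i) (v j) = t) -> t <= 1 -> t < 1.
Proof.
case: d v => [//|d] v _ [v_sphere [_ v_nondeg]] v_gram.
rewrite le_eqVlt => /orP[/eqP t1|//]; exfalso.
have v_const i : v i = v 0.
  have [->//|i0] := eqVneq i 0; have i0' : 0 != i by rewrite eq_sym.
  apply/eqP; rewrite -subr_eq0 -dotpp_eq0 !(dotpBl, dotpBr) !v_sphere !v_gram // t1.
  by apply/eqP; ring.
have [a a_neq0 a_orth] := exists_orthogonal (v_sphere 0).
by apply: v_nondeg; exists a; split => // i; rewrite v_const.
Qed.

Lemma regular_simplex_sball_bound (R : realType) d (v : 'I_d.+1 -> 'rV[R]_d.+1) c r :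
  (0 < d)%N -> 0 < r < pi / 2 -> on_sphere c -> regular_simplex v -> sball c r `<=` shull v ->
  exists2 t, -1 <= t /\ skel1_length v = acos t *+ 'C(d.+1, 2) &
    d.+1%:R * sin r ^+ 2 * (1 + (d%:R - 1) * t) <= 1 - t.
Proof.
move=> d_gt0 r_bnd c_sphere v_reg B_sub.
have [t [/andP[tN1 t1] v_gram v_skel]] := regular_simplex_gram d_gt0 v_reg.
have [[v_sphere [v_hemi _]] _] := v_reg.
exists t => //; apply: (regular_sball_bound v_sphere v_gram _ _ r_bnd c_sphere B_sub).
  exact: vertex_sum_gt0 v_sphere v_gram v_hemi.
exact: regular_gram_lt1 v_reg.1 v_gram t1.
Qed.

Lemma bin2_mul2 n : ('C(n, 2) * 2 = n * n.-1)%N.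
Proof.
elim: n => // n IH; rewrite binS bin1 mulnDl IH.
by case: n {IH} => // n; rewrite -mulnDr addn2 mulnC.
Qed.

Lemma regular_gram_neg_bound (R : realType) (D s2 t K : R) : 1 <= D -> 0 <= s2 -> 0 <= K ->
  (D + 1) * s2 * (1 + (D - 1) * t) <= 1 - t ->
  2 * K * (1 + (D ^+ 2 - 1) * s2) < (D + 1) * ((D + 1) * s2 - 1) ->
  2 * K < (D + 1) * - t.
Proof.
move=> D_ge1 s2_ge0 K_ge0 t_bound K_bound.
have Q_gt0 : 0 < 1 + (D ^+ 2 - 1) * s2.
  by rewrite ltr_pwDl // mulr_ge0 // subr_ge0 expr_ge1 // (le_trans ler01).
have t_Q : t * (1 + (D ^+ 2 - 1) * s2) <= 1 - (D + 1) * s2 by nra.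
rewrite -(ltr_pM2r Q_gt0); apply: (lt_le_trans K_bound); nra.
Qed.

Lemma exists_shorter_simplex (R : realType) d (c : 'rV[R]_d.+1)
    (Sreg : 'I_d.+1 -> 'rV[R]_d.+1) r K :
  (0 < d)%N -> 0 < r < pi / 2 -> on_sphere c -> regular_simplex Sreg ->
  sball c r `<=` shull Sreg -> 0 <= K <= pi / 2 -> 1 <= d%:R * sin K ^+ 2 ->
  2 * K * (1 + (d%:R ^+ 2 - 1) * sin r ^+ 2) < (d%:R + 1) * ((d%:R + 1) * sin r ^+ 2 - 1) ->
  exists S : 'I_d.+1 -> 'rV[R]_d.+1,
    spherical_simplex S /\ sball c r `<=` shull S /\ skel1_length S < skel1_length Sreg.
Proof.
move=> d_gt0 r_bnd c_sphere Sreg_reg B_sub K_bnd d_sinK K_bound.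
have [t [tN1 Sreg_skel] t_bound] := regular_simplex_sball_bound d_gt0 r_bnd c_sphere Sreg_reg B_sub.
have [r_gt0 r_lt] := andP r_bnd.
have [S [S_simplex [S_sub S_skel]]] := sball_transport c_sphere
  (corner_simplex_spherical d r_gt0 r_lt) (sball_sub_corner_simplex r_gt0 r_lt).
exists S; do 2!split => //; rewrite S_skel Sreg_skel.
apply: le_lt_trans (skel1_length_corner_simplex_le r_gt0 r_lt K_bnd d_sinK) _.
have d_ge1 : 1 <= d%:R :> R by rewrite ler1n.
have [K_ge0 _] := andP K_bnd.
have Kt : 2 * K < (d%:R + 1) * - t.
  by apply: (regular_gram_neg_bound d_ge1 (sqr_ge0 _) K_ge0 _ K_bound); rewrite natr1.
have t_le0 : t <= 0 by nra.
apply: lt_le_trans (ler_wMn2r _ (pihalfB_le_acos _)); last by apply/andP.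
have C2 : 'C(d.+1, 2)%:R * 2 = (d%:R + 1) * d%:R :> R by rewrite natr1 -!natrM bin2_mul2.
rewrite mulrnBl ltrD2l -mulr_natr; nra.
Qed.

Lemma sin_gt_of_asin_lt (R : realType) (s0 r : R) : 0 < s0 < 1 ->
  asin s0 < r -> r < pi / 2 -> 0 < r /\ s0 < sin r.
Proof.
move=> /andP[s0_gt0 s0_lt1] asin_lt r_lt.
have s0_itv : -1 <= s0 <= 1 by apply/andP; split; lra.
have asinN := asin_geNpi2 s0_itv.
have s0_lt : s0 < sin r.
  rewrite -[X in X < _](asinK (x := s0)) ?in_itv //.
  by rewrite ltr_sin ?in_itv /=; [lra | apply/andP; split | apply/andP; split]; lra.
split => //; rewrite ltNge; apply/negP => r_le0.
have : 0 <= sin (- r) by apply: sin_ge0_pi; apply/andP; split; have := pi_gt0 R; lra.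
by rewrite sinN; lra.
Qed.

Lemma sin_ge_of_cubic (R : realType) (K L : R) : 0 < K < 2 -> L <= K - K ^+ 3 / 6 -> L <= sin K.
Proof. by move=> K_bnd L_le; apply: ltW; apply: le_lt_trans L_le (cubic_lt_sin K_bnd). Qed.

Lemma one_le_mul_sin2 (R : realType) (D L K : R) : 0 < D -> 0 <= L <= sin K -> 1 / D <= L ^+ 2 ->
  1 <= D * sin K ^+ 2.
Proof.
move=> D_gt0 /andP[L_ge0 L_le]; rewrite div1r => DL.
rewrite -ler_pdivrMl // mulr1 (le_trans DL) //.
by rewrite ler_sqr ?nnegrE // (le_trans L_ge0).
Qed.

Lemma near_pihalf_numbers (R : realType) (D u : R) : 3 <= D -> 49 / 50 <= u <= 1 ->
  let K := 1 / 2 + 12 / 25 * (1 / D) in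
  [/\ 1 / 2 <= K <= 2 / 3, 1 / D <= (K - 1 / 20) ^+ 2, K ^+ 3 / 6 <= 1 / 20 &
      2 * K * (1 + (D ^+ 2 - 1) * u) < (D + 1) * ((D + 1) * u - 1)].
Proof.
move=> D_ge3 /andP[u_ge u_le1] K; rewrite {}/K.
have z_gt0 : 0 < 1 / D by rewrite divr_gt0 //; lra.
have z_le : 1 / D <= 1 / 3 by rewrite ler_pdivrMr; lra.
split; [by apply/andP; split; lra | nra | nra |].
rewrite -subr_gt0 (_ : _ - _ = (u * (26 * D ^+ 2 + 50 * D + 24) - (25 * D ^+ 2 + 50 * D + 24))
    / (25 * D)); last by field; lra.
apply: divr_gt0; last lra.
have : 49 / 50 * (26 * D ^+ 2 + 50 * D + 24) <= u * (26 * D ^+ 2 + 50 * D + 24).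
  by apply: ler_wpM2r => //; nra.
nra.
Qed.

Lemma high_dim_numbers (R : realType) (D u : R) : 30 <= D -> 0 < u <= 1 -> 3 <= D * u ->
  1 / D <= (1 / 5 - 1 / 750) ^+ 2 /\ 2 * (1 / 5) * (1 + (D ^+ 2 - 1) * u) < (D + 1) * ((D + 1) * u - 1).
Proof.
move=> D_ge30 /andP[u_gt0 u_le1] Du_ge3; split.
  by apply: le_trans (_ : 1 / 30 <= _); [rewrite ler_pdivrMr; lra | lra].
have : 3 * D <= D * (D * u) by rewrite mulrC ler_wpM2l //; lra.
nra.
Qed.

Lemma shorter_simplex_near_pihalf (R : realType) d : (3 <= d)%N ->
  exists2 eps : R, 0 < eps & forall r, pi / 2 - eps < r -> r < pi / 2 ->
  forall (c : 'rV[R]_d.+1) (Sreg : 'I_d.+1 -> 'rV[R]_d.+1),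
    on_sphere c -> regular_simplex Sreg -> sball c r `<=` shull Sreg ->
  exists S : 'I_d.+1 -> 'rV[R]_d.+1,
    spherical_simplex S /\ sball c r `<=` shull S /\ skel1_length S < skel1_length Sreg.
Proof.
move=> d_ge3; set s0 : R := 99 / 100.
have s0_bnd : 0 < s0 < 1 by apply/andP; split; rewrite /s0; lra.
exists (pi / 2 - asin s0).
  by rewrite subr_gt0 asin_ltpi2 //; apply/andP; split; rewrite /s0; lra.
move=> r r_gt r_lt c Sreg c_sphere Sreg_reg B_sub.
have asin_lt : asin s0 < r by lra.
have [r_gt0 s0_lt] := sin_gt_of_asin_lt s0_bnd asin_lt r_lt; rewrite /s0 in s0_lt.
have D_ge3 : 3 <= d%:R :> R by rewrite (ler_nat R 3 d).
have u_bnd : 49 / 50 <= sin r ^+ 2 <= 1.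
  have sin_ge : (99 / 100) ^+ 2 <= sin r ^+ 2 by rewrite ler_sqr ?nnegrE; lra.
  by apply/andP; split; [lra | apply: exprn_ile1 (sin_le1 r); lra].
have [/andP[K_ge K_le] K_sin K_cube K_bound] := near_pihalf_numbers D_ge3 u_bnd.
have r_bnd : 0 < r < pi / 2 by apply/andP.
apply: (exists_shorter_simplex _ r_bnd c_sphere Sreg_reg B_sub _ _ K_bound).
- exact: leq_trans d_ge3.
- by apply/andP; split; have := pihalf_ge1 R; lra.
- apply: (one_le_mul_sin2 _ _ K_sin); first lra.
  by apply/andP; split; [lra | apply: sin_ge_of_cubic; [apply/andP; split | ]; lra].
Qed.

Lemma shorter_simplex_high_dim (R : realType) (r : R) : 0 < r < pi / 2 ->
  exists d0 : nat, forall d : nat, (d0 <= d)%N ->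
  forall (c : 'rV[R]_d.+1) (Sreg : 'I_d.+1 -> 'rV[R]_d.+1),
    on_sphere c -> regular_simplex Sreg -> sball c r `<=` shull Sreg ->
  exists S : 'I_d.+1 -> 'rV[R]_d.+1,
    spherical_simplex S /\ sball c r `<=` shull S /\ skel1_length S < skel1_length Sreg.
Proof.
move=> r_bnd; have sin_gt0 : 0 < sin r by apply: sin_gt0_pihalf.
have u_bnd : 0 < sin r ^+ 2 <= 1.
  by apply/andP; split; [exact: exprn_gt0 | exact: exprn_ile1 (ltW sin_gt0) (sin_le1 r)].
set b := Num.Def.archi_bound (3 / sin r ^+ 2).
exists (maxn 30 b) => d; rewrite geq_max => /andP[d_ge30 d_geb] c Sreg c_sphere Sreg_reg B_sub.
have D_ge30 : 30 <= d%:R :> R by rewrite (ler_nat R 30 d).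
have Du_ge3 : 3 <= d%:R * sin r ^+ 2.
  have := archi_boundP (divr_ge0 (ler0n R 3) (ltW (exprn_gt0 2 sin_gt0))).
  rewrite -/b => lt_b; rewrite -ler_pdivrMr ?exprn_gt0 //.
  by apply/ltW/(lt_le_trans lt_b); rewrite ler_nat.
have [K_sin K_bound] := high_dim_numbers D_ge30 u_bnd Du_ge3.
apply: (exists_shorter_simplex _ r_bnd c_sphere Sreg_reg B_sub _ _ K_bound).
- exact: leq_trans d_ge30.
- by apply/andP; split; have := pihalf_ge1 R; lra.
- apply: (one_le_mul_sin2 _ _ K_sin); first lra.
  apply/andP; split; first lra.
  by apply: sin_ge_of_cubic; [apply/andP; split | rewrite !exprS expr0]; lra.
Qed.

Theorem mainTheorem11 (R : realType) :
  (forall d : nat, (3 <= d)%N ->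
    exists eps : R, 0 < eps /\
    forall r : R, pi / 2 - eps < r -> r < pi / 2 ->
    forall (c : 'rV[R]_d.+1), on_sphere c ->
    forall Sreg : 'I_d.+1 -> 'rV[R]_d.+1,
      regular_simplex Sreg -> circumscribed Sreg (sball c r) ->
    exists S : 'I_d.+1 -> 'rV[R]_d.+1,
      spherical_simplex S /\ sball c r `<=` shull S /\
      skel1_length S < skel1_length Sreg)
  /\
  (forall r : R, 0 < r -> r < pi / 2 ->
    exists d0 : nat, forall d : nat, (2 <= d)%N -> (d0 <= d)%N ->
    forall (c : 'rV[R]_d.+1), on_sphere c ->
    forall Sreg : 'I_d.+1 -> 'rV[R]_d.+1,
      regular_simplex Sreg -> circumscribed Sreg (sball c r) ->
    exists S : 'I_d.+1 -> 'rV[R]_d.+1,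
      spherical_simplex S /\ sball c r `<=` shull S /\
      skel1_length S < skel1_length Sreg).
Proof.
split.
- move=> d d_ge3; have [eps eps_gt0 shorter] := shorter_simplex_near_pihalf R d_ge3.
  exists eps; split => // r r_gt r_lt c c_sphere Sreg Sreg_reg [B_sub _].
  exact: shorter.
- move=> r r_gt0 r_lt; have r_bnd : 0 < r < pi / 2 by apply/andP.
  have [d0 shorter] := shorter_simplex_high_dim r_bnd.
  exists d0 => d _ d_ge c c_sphere Sreg Sreg_reg [B_sub _].
  exact: shorter.
Qed.
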